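(* Let $X\in\mathbb{R}^{N\times d}$, and let $(W_a,A_a)$, $(W_b,A_b)\in\mathbb{R}^{d\times m}\times\mathbb{R}^{m\times m}$. Let $\lambda_1:=\max\{\|W_a\|,\|W_b\|\}$, $\lambda_2:=\max\{\|A_a\|,\|A_b\|\}$ (assume $\lambda_2>0$), and choose $\gamma>0$ with $\gamma_0:=\gamma\lambda_2<1$. Then for $i\in\{a,b\}$ the equation $Z_i=\sigma(\gamma Z_iA_i+\sigma(XW_i))$ has a unique solution $Z_i\in\mathbb{R}^{N\times m}$, and $$\|Z_a-Z_b\|\le\frac{\|X\|_F}{1-\gamma_0}\left[\frac{\gamma_0}{1-\gamma_0}\frac{\lambda_1}{\lambda_2}\|A_a-A_b\|+\|W_a-W_b\|\right].$$
   Context: $\sigma(u)=\max\{0,u\}$ applied entrywise. $\|\cdot\|$ is the spectral norm and $\|\cdot\|_F$ the Frobenius norm. *)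

From HB Require Import structures.
From mathcomp Require Import all_boot all_order all_algebra.
From mathcomp Require Import classical_sets reals.
Set Implicit Arguments. Unset Strict Implicit. Unset Printing Implicit Defensive.
Import Order.TTheory GRing.Theory Num.Theory.
Local Open Scope ring_scope.
Local Open Scope classical_set_scope.

Definition relu {R : realType} (u : R) : R := Num.max 0 u.
Definition relu_mx {R : realType} (p q : nat) (M : 'M[R]_(p, q)) : 'M[R]_(p, q) :=
  map_mx relu M.

Definition vnorm2 {R : realType} (q : nat) (x : 'cV[R]_q) : R :=
  Num.sqrt (\sum_(i < q) x i 0 ^+ 2).

Definition specnorm {R : realType} (p q : nat) (A : 'M[R]_(p, q)) : R :=
  sup [set r : R | exists x : 'cV[R]_q, vnorm2 x <= 1 /\ r = vnorm2 (A *m x)].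

Definition frobnorm {R : realType} (p q : nat) (A : 'M[R]_(p, q)) : R :=
  Num.sqrt (\sum_(i < p) \sum_(j < q) A i j ^+ 2).

Definition is_eq_sol {R : realType} (N d m : nat) (gamma : R)
    (X : 'M[R]_(N, d)) (W : 'M[R]_(d, m)) (A : 'M[R]_m) (Z : 'M[R]_(N, m)) : Prop :=
  Z = relu_mx (gamma *: (Z *m A) + relu_mx (X *m W)).

(* The map Z |-> relu (gamma Z A + relu (X W)) is a contraction for the Frobenius
   norm with constant gamma ||A|| < 1, because relu is 1-Lipschitz and
   |Z A|_F <= |Z|_F ||A||; so the equation has a unique solution.  Estimating the
   equation itself gives |Zb|_F <= |X|_F lambda1 / (1 - gamma0); estimating the
   difference of the two equations gives
   (1 - gamma0) |Za - Zb|_F <= gamma |Zb|_F ||Aa - Ab|| + |X|_F ||Wa - Wb||,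
   and the spectral norm is dominated by the Frobenius norm. *)

From HB Require Import structures.
From mathcomp Require Import all_boot all_order all_algebra interval_inference.
From mathcomp Require Import boolp classical_sets functions reals.
From mathcomp Require Import topology normedtype sequences.
From mathcomp Require Import ring lra.
Set Implicit Arguments. Unset Strict Implicit. Unset Printing Implicit Defensive.
Import Order.TTheory GRing.Theory Num.Theory numFieldNormedType.Exports.
Local Open Scope ring_scope.

Section EuclideanNorm.
Variables (R : rcfType) (I : finType).
Implicit Types (a b : I -> R) (c : R).

Lemma sum_sqr_ge0 a : 0 <= \sum_i a i ^+ 2.
Proof. by apply: sumr_ge0 => i _; exact: sqr_ge0. Qed.

Lemma cauchy_schwarz a b :
  (\sum_i a i * b i) ^+ 2 <= (\sum_i a i ^+ 2) * (\sum_i b i ^+ 2).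
Proof.
set A := \sum_i a i ^+ 2; set B := \sum_i b i ^+ 2; set C := \sum_i a i * b i.
have B_ge0 : 0 <= B := sum_sqr_ge0 b.
have [B0|B_gt0] := eqVneq B 0.
  have b0 i : b i = 0.
    apply/eqP; rewrite -sqrf_eq0; move/eqP: B0.
    by rewrite psumr_eq0 => [/allP/(_ i (mem_index_enum i))|j _]; rewrite ?sqr_ge0.
  by rewrite /C big1 ?expr0n ?B0 ?mulr0 // => i _; rewrite b0 mulr0.
have : 0 <= B * (A * B - C ^+ 2).
  have -> : B * (A * B - C ^+ 2) = \sum_i (B * a i - C * b i) ^+ 2.
    have expand i : (B * a i - C * b i) ^+ 2 =
        B ^+ 2 * a i ^+ 2 - (2 * B * C) * (a i * b i) + C ^+ 2 * b i ^+ 2.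
      by ring.
    rewrite (eq_bigr _ (fun i _ => expand i)) !big_split /= sumrN -!mulr_sumr.
    by rewrite -/A -/B -/C; ring.
  exact: sum_sqr_ge0.
by rewrite pmulr_rge0 ?lt_def ?B_gt0 // subr_ge0.
Qed.

Definition l2norm a := Num.sqrt (\sum_i a i ^+ 2).

Lemma l2norm_ge0 a : 0 <= l2norm a.
Proof. exact: sqrtr_ge0. Qed.

Lemma sqr_l2norm a : l2norm a ^+ 2 = \sum_i a i ^+ 2.
Proof. by rewrite sqr_sqrtr // sum_sqr_ge0. Qed.

Lemma sum_mul_le_l2norm a b : \sum_i a i * b i <= l2norm a * l2norm b.
Proof.
rewrite (le_trans (ler_norm _)) // -sqrtr_sqr -sqrtrM ?sum_sqr_ge0 //.
by rewrite ler_sqrt ?mulr_ge0 ?sum_sqr_ge0 ?cauchy_schwarz.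
Qed.

Lemma ler_l2norm a b : (forall i, a i ^+ 2 <= b i ^+ 2) -> l2norm a <= l2norm b.
Proof. by move=> ab; rewrite ler_sqrt ?sum_sqr_ge0 // ler_sum. Qed.

Lemma ler_norm_l2norm a i : `|a i| <= l2norm a.
Proof.
rewrite -sqrtr_sqr ler_sqrt ?sum_sqr_ge0 // (bigD1 i) //= lerDl.
by apply: sumr_ge0 => j _; rewrite sqr_ge0.
Qed.

Lemma l2normZ c a : l2norm (fun i => c * a i) = `|c| * l2norm a.
Proof.
rewrite -sqrtr_sqr -sqrtrM ?sqr_ge0 // mulr_sumr.
by congr Num.sqrt; apply: eq_bigr => i _; rewrite exprMn.
Qed.

Lemma l2normD a b : l2norm (fun i => a i + b i) <= l2norm a + l2norm b.
Proof.
rewrite -(ler_pXn2r (_ : 0 < 2)%N) ?nnegrE ?addr_ge0 ?l2norm_ge0 //.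
rewrite sqrrD !sqr_l2norm.
have -> : \sum_i (a i + b i) ^+ 2 =
    \sum_i a i ^+ 2 + (\sum_i a i * b i) *+ 2 + \sum_i b i ^+ 2.
  by rewrite -sumrMnl -!big_split /=; apply: eq_bigr => i _; rewrite sqrrD.
by rewrite lerD2r lerD2l lerMn2r /= sum_mul_le_l2norm.
Qed.

Lemma l2norm_eq0 a : l2norm a = 0 -> forall i, a i = 0.
Proof. by move=> a0 i; apply/eqP; rewrite -normr_le0 -a0 ler_norm_l2norm. Qed.

End EuclideanNorm.

Section Frobenius.
Variable R : realType.
Implicit Types (p q n : nat) (c : R).

Lemma frobnormE p q (A : 'M[R]_(p, q)) : frobnorm A = l2norm (fun ij => A ij.1 ij.2).
Proof. by rewrite /frobnorm /l2norm pair_bigA. Qed.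

Lemma frobnorm_ge0 p q (A : 'M[R]_(p, q)) : 0 <= frobnorm A.
Proof. exact: sqrtr_ge0. Qed.

Lemma sqr_frobnorm p q (A : 'M[R]_(p, q)) : frobnorm A ^+ 2 = \sum_i \sum_j A i j ^+ 2.
Proof. by rewrite frobnormE sqr_l2norm pair_bigA. Qed.

Lemma ler_norm_frobnorm p q (A : 'M[R]_(p, q)) i j : `|A i j| <= frobnorm A.
Proof. by rewrite frobnormE (ler_norm_l2norm (fun ij => A ij.1 ij.2) (i, j)). Qed.

Lemma ler_frobnorm p q (A B : 'M[R]_(p, q)) :
  (forall i j, A i j ^+ 2 <= B i j ^+ 2) -> frobnorm A <= frobnorm B.
Proof. by move=> AB; rewrite !frobnormE; apply: ler_l2norm => -[i j]; exact: AB. Qed.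

Lemma frobnormZ p q c (A : 'M[R]_(p, q)) : frobnorm (c *: A) = `|c| * frobnorm A.
Proof.
by rewrite !frobnormE -l2normZ; congr l2norm; apply: funext => ij; rewrite mxE.
Qed.

Lemma frobnormD p q (A B : 'M[R]_(p, q)) : frobnorm (A + B) <= frobnorm A + frobnorm B.
Proof.
rewrite !frobnormE (le_trans _ (l2normD _ _)) //.
by apply: ler_l2norm => ij; rewrite mxE.
Qed.

Lemma frobnorm_eq0 p q (A : 'M[R]_(p, q)) : frobnorm A = 0 -> A = 0.
Proof.
by rewrite frobnormE => /l2norm_eq0 A0; apply/matrixP => i j; rewrite mxE (A0 (i, j)).
Qed.

Lemma frobnorm0 p q : frobnorm (0 : 'M[R]_(p, q)) = 0.
Proof. by rewrite -(scale0r 0) frobnormZ normr0 mul0r. Qed.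

Lemma frobnormM p n q (A : 'M[R]_(p, n)) (B : 'M[R]_(n, q)) :
  frobnorm (A *m B) <= frobnorm A * frobnorm B.
Proof.
rewrite -(ler_pXn2r (_ : 0 < 2)%N) ?nnegrE ?mulr_ge0 ?frobnorm_ge0 //.
rewrite exprMn !sqr_frobnorm (exchange_big _ _ _ _ _ (fun j k => B j k ^+ 2)) /=.
rewrite mulr_suml; apply: ler_sum => i _; rewrite mulr_sumr.
by apply: ler_sum => k _; rewrite mxE cauchy_schwarz.
Qed.

Lemma frobnorm_tr p q (A : 'M[R]_(p, q)) : frobnorm A^T = frobnorm A.
Proof.
rewrite /frobnorm exchange_big; congr Num.sqrt.
by apply: eq_bigr => i _; apply: eq_bigr => j _; rewrite mxE.
Qed.

Lemma vnorm2E q (x : 'cV[R]_q) : vnorm2 x = frobnorm x.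
Proof. by rewrite /frobnorm; congr Num.sqrt; apply: eq_bigr => i _; rewrite big_ord1. Qed.

End Frobenius.

Section ReLU.
Variable R : realType.

Lemma relu_sub_sqr_le (u v : R) : (relu u - relu v) ^+ 2 <= (u - v) ^+ 2.
Proof.
rewrite /relu !maxEle; case: (leP 0 u) => u0; case: (leP 0 v) => v0 //.
- rewrite subr0 -subr_ge0 (_ : _ - _ = v * (v - 2 * u)); last by ring.
  by rewrite nmulr_rge0 //; lra.
- rewrite sub0r sqrrN -subr_ge0 (_ : _ - _ = u * (u - 2 * v)); last by ring.
  by rewrite nmulr_rge0 //; lra.
- by rewrite subr0 expr0n /= sqr_ge0.
Qed.

Lemma frobnorm_relu_sub p q (P Q : 'M[R]_(p, q)) :
  frobnorm (relu_mx P - relu_mx Q) <= frobnorm (P - Q).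
Proof. by apply: ler_frobnorm => i j; rewrite !mxE relu_sub_sqr_le. Qed.

Lemma frobnorm_relu p q (P : 'M[R]_(p, q)) : frobnorm (relu_mx P) <= frobnorm P.
Proof.
have relu_mx0 : relu_mx (0 : 'M[R]_(p, q)) = 0.
  by apply/matrixP => i j; rewrite !mxE /relu maxxx.
by have := frobnorm_relu_sub P 0; rewrite relu_mx0 !subr0.
Qed.

End ReLU.

Section Spectral.
Local Open Scope classical_set_scope.
Variable R : realType.
Implicit Types p q n : nat.

Definition gain_set p q (A : 'M[R]_(p, q)) :=
  [set r : R | exists x : 'cV[R]_q, vnorm2 x <= 1 /\ r = vnorm2 (A *m x)].

Lemma gain_set_ubound p q (A : 'M[R]_(p, q)) : ubound (gain_set A) (frobnorm A).
Proof.
move=> _ [x [x1 ->]]; rewrite vnorm2E in x1; rewrite vnorm2E.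
by apply: le_trans (frobnormM _ _) _; rewrite ler_piMr ?frobnorm_ge0.
Qed.

Lemma gain_set0 p q (A : 'M[R]_(p, q)) : gain_set A 0.
Proof. by exists 0; split; rewrite ?mulmx0 vnorm2E frobnorm0. Qed.

Lemma specnorm_ge0 p q (A : 'M[R]_(p, q)) : 0 <= specnorm A.
Proof.
by apply: (ub_le_sup _ (gain_set0 A)); exists (frobnorm A); exact: gain_set_ubound.
Qed.

Lemma specnorm_le_frobnorm p q (A : 'M[R]_(p, q)) : specnorm A <= frobnorm A.
Proof. by apply: ge_sup; [exists 0; exact: gain_set0 | exact: gain_set_ubound]. Qed.

Lemma frobnorm_mulmx_cV p q (A : 'M[R]_(p, q)) (x : 'cV[R]_q) :
  frobnorm (A *m x) <= specnorm A * frobnorm x.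
Proof.
have [x0|x_neq0] := eqVneq (frobnorm x) 0.
  by rewrite (frobnorm_eq0 x0) mulmx0 !frobnorm0 mulr0.
have x_gt0 : 0 < frobnorm x by rewrite lt_def x_neq0 frobnorm_ge0.
have : gain_set A (frobnorm (A *m ((frobnorm x)^-1 *: x))).
  exists ((frobnorm x)^-1 *: x); rewrite !vnorm2E frobnormZ.
  by rewrite ger0_norm ?invr_ge0 ?frobnorm_ge0 // mulVf.
move=> /(ub_le_sup (ex_intro _ _ (@gain_set_ubound _ _ A))).
rewrite -scalemxAr frobnormZ ger0_norm ?invr_ge0 ?frobnorm_ge0 //.
by rewrite ler_pdivrMl // mulrC.
Qed.

(* Transposing turns the row case into the column case:
   [|r A|^2 = r (A (r A)^T) <= |r| |A (r A)^T| <= |r| ||A|| |r A|]. *)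
Lemma frobnorm_mulmx_rV n q (r : 'rV[R]_n) (A : 'M[R]_(n, q)) :
  frobnorm (r *m A) <= frobnorm r * specnorm A.
Proof.
set u := r *m A.
have [u0|u_neq0] := eqVneq (frobnorm u) 0.
  by rewrite u0 mulr_ge0 ?frobnorm_ge0 ?specnorm_ge0.
have u_gt0 : 0 < frobnorm u by rewrite lt_def u_neq0 frobnorm_ge0.
rewrite -(ler_pM2r u_gt0) -expr2 -mulrA.
have -> : frobnorm u ^+ 2 = (r *m (A *m u^T)) 0 0.
  rewrite mulmxA -/u sqr_frobnorm big_ord1 mxE.
  by apply: eq_bigr => j _; rewrite [u^T j 0]mxE expr2.
rewrite (le_trans (ler_norm _)) // (le_trans (ler_norm_frobnorm _ _ _)) //.
rewrite (le_trans (frobnormM _ _)) // ler_wpM2l ?frobnorm_ge0 //.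
by rewrite -(frobnorm_tr u) frobnorm_mulmx_cV.
Qed.

Lemma frobnorm_mulmx_specnorm p n q (Z : 'M[R]_(p, n)) (A : 'M[R]_(n, q)) :
  frobnorm (Z *m A) <= frobnorm Z * specnorm A.
Proof.
have sqr_frobnorm_row (k : nat) (M : 'M[R]_(p, k)) i :
    frobnorm (row i M) ^+ 2 = \sum_j M i j ^+ 2.
  by rewrite sqr_frobnorm big_ord1; apply: eq_bigr => j _; rewrite mxE.
rewrite -(ler_pXn2r (_ : 0 < 2)%N) ?nnegrE ?mulr_ge0 ?frobnorm_ge0 ?specnorm_ge0 //.
rewrite exprMn !sqr_frobnorm mulr_suml; apply: ler_sum => i _.
rewrite -sqr_frobnorm_row -(sqr_frobnorm_row _ Z) row_mul -exprMn.
by rewrite lerXn2r ?nnegrE ?mulr_ge0 ?frobnorm_ge0 ?specnorm_ge0 ?frobnorm_mulmx_rV.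
Qed.

End Spectral.

(* ['M[R]_(p, q)] has a normed-module and a complete structure but not their join,
   which Banach's fixed point theorem needs. *)
Definition complete_mx (R : realType) p q := 'M[R]_(p, q).
HB.instance Definition _ (R : realType) p q :=
  NormedModule.copy (complete_mx R p q) 'M[R]_(p, q).
HB.instance Definition _ (R : realType) p q :=
  Complete.copy (complete_mx R p q) 'M[R]_(p, q).

Section FrobeniusContraction.
Local Open Scope classical_set_scope.
Variables (R : realType) (p q : nat).
Local Notation M := 'M[R]_(p, q).

Lemma mx_norm_le_frobnorm (A : M) : mx_norm A <= frobnorm A.
Proof.
rewrite mx_normrE; apply: bigmax_le; first exact: frobnorm_ge0.
by move=> [i j] _; exact: ler_norm_frobnorm.
Qed.

Lemma frobnorm_le_mx_norm (A : M) :
  frobnorm A <= mx_norm A * frobnorm (const_mx 1 : M).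
Proof.
have mx_norm_ge0 : 0 <= mx_norm A := normr_ge0 A.
rewrite -[mx_norm A]ger0_norm // -frobnormZ; apply: ler_frobnorm => i j.
rewrite !mxE mulr1 -[A i j ^+ 2]ger0_norm ?sqr_ge0 // normrX lerXn2r ?nnegrE //.
by rewrite mx_normrE (le_bigmax _ (fun ij => `|A ij.1 ij.2|) (i, j)).
Qed.

(* Banach's theorem for the max norm [mx_norm] applies to a large enough iterate
   of [f], since all norms on matrices are equivalent. *)
Lemma frobnorm_contraction_fixpoint (f : M -> M) (k : R) :
  0 <= k -> k < 1 -> (forall x y, frobnorm (f x - f y) <= k * frobnorm (x - y)) ->
  exists z, f z = z /\ forall z', f z' = z' -> z' = z.
Proof.
move=> k_ge0 k_lt1 f_lip.
set c := frobnorm (const_mx 1 : M).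
have iter_lip n x y : frobnorm (iter n f x - iter n f y) <= k ^+ n * frobnorm (x - y).
  elim: n => [|n IHn]; first by rewrite expr0 mul1r.
  by rewrite !iterS (le_trans (f_lip _ _)) // exprS -mulrA ler_wpM2l.
have [n kn_lt1] : exists n, k ^+ n * c < 1.
  have : k ^+ n * c @[n --> \oo] --> (0 : R).
    by rewrite -(mul0r c); apply: cvgMr_tmp; apply: cvg_expr; rewrite ger0_norm.
  by move=> /cvgr_lt/(_ _ ltr01) [N _ HN]; exists N; apply: HN => /=.
have kn_ge0 : 0 <= k ^+ n * c by rewrite mulr_ge0 ?exprn_ge0 ?frobnorm_ge0.
pose g : complete_mx R p q -> complete_mx R p q := iter n f.
have g_contr : is_contraction (totalfun_ [set: complete_mx R p q] g).
  exists (NngNum kn_ge0); split => //= -[x y] _ /=.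
  rewrite (le_trans (mx_norm_le_frobnorm _)) // (le_trans (iter_lip _ _ _)) //.
  by rewrite -mulrA ler_wpM2l ?exprn_ge0 // mulrC frobnorm_le_mx_norm.
have [z _ gz] := banach_fixed_point g_contr closedT (ex_intro _ 0 I).
have fz : f z = z.
  apply: (contraction_fixpoint_unique g_contr I I _ gz).
  by change (f z = iter n f (f z)); rewrite -iterSr iterS -gz.
exists z; split => // z' fz'; apply/eqP; rewrite -subr_eq0; apply/eqP/frobnorm_eq0.
apply/eqP; rewrite eq_le frobnorm_ge0 andbT.
have := f_lip z' z; rewrite fz fz'; have := frobnorm_ge0 (z' - z); nra.
Qed.

End FrobeniusContraction.

Section ImplicitLayer.
Variables (R : realType) (N d m : nat) (gamma : R) (X : 'M[R]_(N, d)).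
Hypothesis gamma_ge0 : 0 <= gamma.
Implicit Types (W : 'M[R]_(d, m)) (A : 'M[R]_m) (Z : 'M[R]_(N, m)).

Definition layer W A Z := relu_mx (gamma *: (Z *m A) + relu_mx (X *m W)).

Lemma layer_lipschitz W A Z Z' :
  frobnorm (layer W A Z - layer W A Z') <= gamma * specnorm A * frobnorm (Z - Z').
Proof.
rewrite (le_trans (frobnorm_relu_sub _ _)) //.
rewrite opprD addrACA subrr addr0 -scalerBr -mulmxBl frobnormZ ger0_norm //.
by rewrite -mulrA ler_wpM2l // mulrC frobnorm_mulmx_specnorm.
Qed.

Lemma eq_sol_exists_unique W A : gamma * specnorm A < 1 ->
  exists Z, is_eq_sol gamma X W A Z /\ forall Z', is_eq_sol gamma X W A Z' -> Z' = Z.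
Proof.
move=> contr; have k_ge0 : 0 <= gamma * specnorm A by rewrite mulr_ge0 ?specnorm_ge0.
have [Z [fixZ uniqZ]] :=
  frobnorm_contraction_fixpoint k_ge0 contr (@layer_lipschitz W A).
by exists Z; split=> [|Z' solZ']; [rewrite /is_eq_sol -[in LHS]fixZ | apply: uniqZ].
Qed.

Lemma frobnorm_eq_sol W A Z : is_eq_sol gamma X W A Z ->
  frobnorm Z <= gamma * specnorm A * frobnorm Z + frobnorm X * specnorm W.
Proof.
move=> {1}->; rewrite (le_trans (frobnorm_relu _)) // (le_trans (frobnormD _ _)) //.
apply: lerD.
  by rewrite frobnormZ ger0_norm // -mulrA ler_wpM2l // mulrC frobnorm_mulmx_specnorm.
by rewrite (le_trans (frobnorm_relu _)) // frobnorm_mulmx_specnorm.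
Qed.

Lemma frobnorm_eq_sol_sub (Wa Wb : 'M[R]_(d, m)) (Aa Ab : 'M[R]_m)
    (Za Zb : 'M[R]_(N, m)) :
  is_eq_sol gamma X Wa Aa Za -> is_eq_sol gamma X Wb Ab Zb ->
  frobnorm (Za - Zb) <= gamma * specnorm Aa * frobnorm (Za - Zb)
                        + gamma * frobnorm Zb * specnorm (Aa - Ab)
                        + frobnorm X * specnorm (Wa - Wb).
Proof.
move=> solZa solZb; rewrite {1}solZa {1}solZb.
rewrite (le_trans (frobnorm_relu_sub _ _)) //.
have -> : gamma *: (Za *m Aa) + relu_mx (X *m Wa)
          - (gamma *: (Zb *m Ab) + relu_mx (X *m Wb))
    = gamma *: ((Za - Zb) *m Aa) + gamma *: (Zb *m (Aa - Ab))
      + (relu_mx (X *m Wa) - relu_mx (X *m Wb)).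
  rewrite mulmxBl mulmxBr !scalerBr addrA.
  rewrite (addrA (gamma *: (Za *m Aa) - gamma *: (Zb *m Aa))) subrK.
  by rewrite opprD addrACA addrA.
rewrite (le_trans (frobnormD _ _)) // lerD //; last first.
  by rewrite (le_trans (frobnorm_relu_sub _ _)) // -mulmxBr frobnorm_mulmx_specnorm.
rewrite (le_trans (frobnormD _ _)) // !frobnormZ ger0_norm // -!mulrA -!mulrDr.
by rewrite ler_wpM2l // lerD ?frobnorm_mulmx_specnorm // mulrC frobnorm_mulmx_specnorm.
Qed.

End ImplicitLayer.

Theorem lemma4 (R : realType) (N d m : nat) (X : 'M[R]_(N, d))
    (Wa Wb : 'M[R]_(d, m)) (Aa Ab : 'M[R]_m) (gamma : R) :
  let lambda1 := Num.max (specnorm Wa) (specnorm Wb) in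
  let lambda2 := Num.max (specnorm Aa) (specnorm Ab) in
  let gamma0 := gamma * lambda2 in
  0 < lambda2 -> 0 < gamma -> gamma0 < 1 ->
  (exists Za, is_eq_sol gamma X Wa Aa Za /\
     forall Z', is_eq_sol gamma X Wa Aa Z' -> Z' = Za) /\
  (exists Zb, is_eq_sol gamma X Wb Ab Zb /\
     forall Z', is_eq_sol gamma X Wb Ab Z' -> Z' = Zb) /\
  (forall Za Zb, is_eq_sol gamma X Wa Aa Za -> is_eq_sol gamma X Wb Ab Zb ->
     specnorm (Za - Zb) <=
       frobnorm X / (1 - gamma0) *
       (gamma0 / (1 - gamma0) * (lambda1 / lambda2) * specnorm (Aa - Ab)
        + specnorm (Wa - Wb))).
Proof.
move=> l1 l2 g0 l2_gt0 gamma_gt0 g0_lt1; have gamma_ge0 := ltW gamma_gt0.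
have Wb_le : specnorm Wb <= l1 by rewrite le_max lexx orbT.
have [Aa_le Ab_le] : specnorm Aa <= l2 /\ specnorm Ab <= l2.
  by rewrite !le_max !lexx orbT.
have gAa_le : gamma * specnorm Aa <= g0 by rewrite ler_wpM2l.
have gAb_le : gamma * specnorm Ab <= g0 by rewrite ler_wpM2l.
split; first by apply: eq_sol_exists_unique; rewrite // (le_lt_trans gAa_le).
split; first by apply: eq_sol_exists_unique; rewrite // (le_lt_trans gAb_le).
move=> Za Zb solZa solZb.
have sub_g0_gt0 : 0 < 1 - g0 by rewrite subr_gt0.
have X_ge0 := frobnorm_ge0 X; have Zb_ge0 := frobnorm_ge0 Zb.
have D_ge0 := frobnorm_ge0 (Za - Zb); have sA_ge0 := specnorm_ge0 (Aa - Ab).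
have Zb_le : frobnorm Zb <= frobnorm X * l1 / (1 - g0).
  rewrite ler_pdivlMr //; have := frobnorm_eq_sol gamma_ge0 solZb.
  have := ler_wpM2r Zb_ge0 gAb_le; have := ler_wpM2l X_ge0 Wb_le; lra.
have D_le : frobnorm (Za - Zb) * (1 - g0) <=
    gamma * (frobnorm X * l1 / (1 - g0)) * specnorm (Aa - Ab)
    + frobnorm X * specnorm (Wa - Wb).
  have := frobnorm_eq_sol_sub gamma_ge0 solZa solZb.
  have := ler_wpM2r D_ge0 gAa_le.
  have := ler_wpM2r sA_ge0 (ler_wpM2l gamma_ge0 Zb_le); lra.
suff -> : frobnorm X / (1 - g0) *
    (g0 / (1 - g0) * (l1 / l2) * specnorm (Aa - Ab) + specnorm (Wa - Wb)) =
    (gamma * (frobnorm X * l1 / (1 - g0)) * specnorm (Aa - Ab)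
     + frobnorm X * specnorm (Wa - Wb)) / (1 - g0).
  rewrite ler_pdivlMr //; apply: le_trans D_le.
  by rewrite ler_pM2r // specnorm_le_frobnorm.
by rewrite /g0; field; rewrite -/g0 (gt_eqF sub_g0_gt0) (gt_eqF l2_gt0).
Qed.
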